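(* Every proof of a formula $F$ in $\mathsf{PA}^\exists$ can be transformed into a proof of $F$ of the following form: there are proofs $\mathcal{D}_1,\dots,\mathcal{D}_n$ of $F$ that are purely intuitionistic (contain no application of the rule $\mathsf{EM}$, possibly with open assumptions), and the proof of $F$ is obtained from $\mathcal{D}_1,\dots,\mathcal{D}_n$ by repeated applications of the rule $\mathsf{EM}$ only, each with conclusion $F$.
   Context: $\mathsf{PA}^\exists$ is presented as a natural deduction system for arithmetic over $0,\mathsf{S},+,\cdot,=$ whose formulas are $\exists$-translations (so no universal quantifier occurs and no $\forall$-rules are used), where the $\exists$-translation is: $F^\exists=F$ for atomic $F$; commuting with $\wedge,\vee,\to,\exists$; $(\forall xF)^\exists=\neg\exists x\neg F^\exists$. Its rules are the intuitionistic natural deduction rules for $\wedge,\vee,\to,\exists,\bot$, the ($\exists$-translated) arithmetical axioms, the translated induction rule $\mathrm{Ind}^\exists$: from $\Gamma\vdash A(0)$ and $\Gamma\vdash\neg\exists\alpha\neg(A(\alpha)\to A(\mathsf{S}\alpha))$ infer $\Gamma\vdash\neg\exists\alpha\neg A(\alpha)$, and the classical rule $\mathsf{EM}$: for any formulas $A,C$, from $\Gamma,A\vdash C$ and $\Gamma,\neg A\vdash C$ infer $\Gamma\vdash C$ (discharging $A$ and $\neg A$). *)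

From Stdlib Require Import List Arith.
Import ListNotations.

(* Terms over 0, S, +, * ; variables are de Bruijn indices. *)
Inductive term : Type :=
| tvar : nat -> term
| tzero : term
| tsucc : term -> term
| tplus : term -> term -> term
| tmult : term -> term -> term.

(* Formulas of PA^exists: no universal quantifier. *)
Inductive form : Type :=
| fEq : term -> term -> form
| fBot : form
| fAnd : form -> form -> form
| fOr : form -> form -> form
| fImp : form -> form -> form
| fEx : form -> form.

Definition fNot (A : form) : form := fImp A fBot.

(* The exists-translation of (forall x A) when A is already translated. *)
Definition fAllT (A : form) : form := fNot (fEx (fNot A)).

Fixpoint lift_t (c : nat) (t : term) : term :=
  match t with
  | tvar n => if c <=? n then tvar (S n) else tvar n
  | tzero => tzero
  | tsucc t1 => tsucc (lift_t c t1)
  | tplus t1 t2 => tplus (lift_t c t1) (lift_t c t2)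
  | tmult t1 t2 => tmult (lift_t c t1) (lift_t c t2)
  end.

Fixpoint lift_f (c : nat) (A : form) : form :=
  match A with
  | fEq t1 t2 => fEq (lift_t c t1) (lift_t c t2)
  | fBot => fBot
  | fAnd A1 A2 => fAnd (lift_f c A1) (lift_f c A2)
  | fOr A1 A2 => fOr (lift_f c A1) (lift_f c A2)
  | fImp A1 A2 => fImp (lift_f c A1) (lift_f c A2)
  | fEx A1 => fEx (lift_f (S c) A1)
  end.

Fixpoint subst_t (k : nat) (u : term) (t : term) : term :=
  match t with
  | tvar n => if n =? k then u else if k <? n then tvar (pred n) else tvar n
  | tzero => tzero
  | tsucc t1 => tsucc (subst_t k u t1)
  | tplus t1 t2 => tplus (subst_t k u t1) (subst_t k u t2)
  | tmult t1 t2 => tmult (subst_t k u t1) (subst_t k u t2)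
  end.

Fixpoint subst_f (k : nat) (u : term) (A : form) : form :=
  match A with
  | fEq t1 t2 => fEq (subst_t k u t1) (subst_t k u t2)
  | fBot => fBot
  | fAnd A1 A2 => fAnd (subst_f k u A1) (subst_f k u A2)
  | fOr A1 A2 => fOr (subst_f k u A1) (subst_f k u A2)
  | fImp A1 A2 => fImp (subst_f k u A1) (subst_f k u A2)
  | fEx A1 => fEx (subst_f (S k) (lift_t 0 u) A1)
  end.

Definition inst (A : form) (t : term) : form := subst_f 0 t A.

(* A(S alpha), alpha = variable 0, other free variables unchanged. *)
Definition instS (A : form) : form := subst_f 0 (tsucc (tvar 0)) (lift_f 1 A).

Definition v0 := tvar 0.
Definition v1 := tvar 1.
Definition v2 := tvar 2.

(* exists-translations of the universal closures of the arithmetical axioms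
   (equality axioms and the Peano axioms for 0, S, +, * ). *)
Inductive PAaxiom : form -> Prop :=
| ax_refl : PAaxiom (fAllT (fEq v0 v0))
| ax_sym : PAaxiom (fAllT (fAllT (fImp (fEq v1 v0) (fEq v0 v1))))
| ax_trans : PAaxiom (fAllT (fAllT (fAllT
      (fImp (fEq v2 v1) (fImp (fEq v1 v0) (fEq v2 v0))))))
| ax_congS : PAaxiom (fAllT (fAllT (fImp (fEq v1 v0) (fEq (tsucc v1) (tsucc v0)))))
| ax_succ0 : PAaxiom (fAllT (fNot (fEq (tsucc v0) tzero)))
| ax_succinj : PAaxiom (fAllT (fAllT (fImp (fEq (tsucc v1) (tsucc v0)) (fEq v1 v0))))
| ax_plus0 : PAaxiom (fAllT (fEq (tplus v0 tzero) v0))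
| ax_plusS : PAaxiom (fAllT (fAllT (fEq (tplus v1 (tsucc v0)) (tsucc (tplus v1 v0)))))
| ax_mult0 : PAaxiom (fAllT (fEq (tmult v0 tzero) tzero))
| ax_multS : PAaxiom (fAllT (fAllT (fEq (tmult v1 (tsucc v0)) (tplus (tmult v1 v0) v1)))).

Inductive deriv : list form -> form -> Type :=
| d_hyp : forall G A, In A G -> deriv G A
| d_ax : forall G A, PAaxiom A -> deriv G A
| d_andI : forall G A B, deriv G A -> deriv G B -> deriv G (fAnd A B)
| d_andE1 : forall G A B, deriv G (fAnd A B) -> deriv G A
| d_andE2 : forall G A B, deriv G (fAnd A B) -> deriv G B
| d_orI1 : forall G A B, deriv G A -> deriv G (fOr A B)
| d_orI2 : forall G A B, deriv G B -> deriv G (fOr A B)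
| d_orE : forall G A B C, deriv G (fOr A B) -> deriv (A :: G) C ->
    deriv (B :: G) C -> deriv G C
| d_impI : forall G A B, deriv (A :: G) B -> deriv G (fImp A B)
| d_impE : forall G A B, deriv G (fImp A B) -> deriv G A -> deriv G B
| d_botE : forall G A, deriv G fBot -> deriv G A
| d_exI : forall G A t, deriv G (inst A t) -> deriv G (fEx A)
| d_exE : forall G A C, deriv G (fEx A) ->
    deriv (A :: map (lift_f 0) G) (lift_f 0 C) -> deriv G C
    (* eigenvariable = index 0, fresh for G and C by lifting *)
| d_ind : forall G A, deriv G (inst A tzero) ->
    deriv G (fNot (fEx (fNot (fImp A (instS A))))) ->
    deriv G (fNot (fEx (fNot A)))
| d_EM : forall G A C, deriv (A :: G) C -> deriv (fNot A :: G) C -> deriv G C.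

Fixpoint em_free {G A} (d : deriv G A) : Prop :=
  match d with
  | d_hyp _ _ _ => True
  | d_ax _ _ _ => True
  | d_andI _ _ _ d1 d2 => em_free d1 /\ em_free d2
  | d_andE1 _ _ _ d1 => em_free d1
  | d_andE2 _ _ _ d1 => em_free d1
  | d_orI1 _ _ _ d1 => em_free d1
  | d_orI2 _ _ _ d1 => em_free d1
  | d_orE _ _ _ _ d1 d2 d3 => em_free d1 /\ em_free d2 /\ em_free d3
  | d_impI _ _ _ d1 => em_free d1
  | d_impE _ _ _ d1 d2 => em_free d1 /\ em_free d2
  | d_botE _ _ d1 => em_free d1
  | d_exI _ _ _ d1 => em_free d1
  | d_exE _ _ _ d1 d2 => em_free d1 /\ em_free d2
  | d_ind _ _ d1 d2 => em_free d1 /\ em_free d2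
  | d_EM _ _ _ _ _ => False
  end.

Inductive em_tree : forall G C, deriv G C -> Prop :=
| emt_leaf : forall G C (d : deriv G C), em_free d -> em_tree G C d
| emt_node : forall G A C (d1 : deriv (A :: G) C) (d2 : deriv (fNot A :: G) C),
    em_tree (A :: G) C d1 -> em_tree (fNot A :: G) C d2 ->
    em_tree G C (d_EM G A C d1 d2).

From Stdlib Require Import List.

(* Sequents derivable by EM-trees (EM on top of intuitionistic leaves) are
   closed under every rule of PA^exists.  A rule whose premises share the
   context of its conclusion is pushed up to the leaves of the EM-trees of its
   premises, after weakening each intuitionistic leaf by the EM assumptions
   collected along its branch.  The discharging rules are handled by a case
   distinction: for ->I and \/E by EM on the discharged formulas, for exists-E
   by EM on the conclusion C.  In the branch ~C the minor premise yields an
   intuitionistic refutation, because an EM-tree ending in bottom collapses: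
   from A |- bottom and ~A |- bottom one gets |- bottom intuitionistically by
   applying ~~A = (~A -> bottom) to ~A. *)

Definition int_provable (G : list form) (A : form) : Prop :=
  exists d : deriv G A, em_free d.

Definition em_provable (G : list form) (A : form) : Prop :=
  exists d : deriv G A, em_tree G A d.

Lemma incl_cons_cons {X : Type} (a : X) (l l' : list X) :
  incl l l' -> incl (a :: l) (a :: l').
Proof. intros Hl. apply incl_cons; [left; reflexivity | apply incl_tl, Hl]. Qed.

Lemma int_provable_weaken G G' A :
  incl G G' -> int_provable G A -> int_provable G' A.
Proof.
  intros Hi [d e]. revert G' Hi e.
  induction d; simpl; intros G' Hi e.
  - exists (d_hyp G' A (Hi _ i)); exact I.
  - exists (d_ax G' A p); exact I.
  - destruct e as [e1 e2].
    destruct (IHd1 G' Hi e1) as [x1 y1], (IHd2 G' Hi e2) as [x2 y2].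
    exists (d_andI _ _ _ x1 x2); split; assumption.
  - destruct (IHd G' Hi e) as [x y]. exists (d_andE1 _ _ _ x); exact y.
  - destruct (IHd G' Hi e) as [x y]. exists (d_andE2 _ _ _ x); exact y.
  - destruct (IHd G' Hi e) as [x y]. exists (d_orI1 _ _ _ x); exact y.
  - destruct (IHd G' Hi e) as [x y]. exists (d_orI2 _ _ _ x); exact y.
  - destruct e as [e1 [e2 e3]].
    destruct (IHd1 G' Hi e1) as [x1 y1],
      (IHd2 _ (incl_cons_cons A _ _ Hi) e2) as [x2 y2],
      (IHd3 _ (incl_cons_cons B _ _ Hi) e3) as [x3 y3].
    exists (d_orE _ _ _ _ x1 x2 x3); repeat split; assumption.
  - destruct (IHd _ (incl_cons_cons A _ _ Hi) e) as [x y].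
    exists (d_impI _ _ _ x); exact y.
  - destruct e as [e1 e2].
    destruct (IHd1 G' Hi e1) as [x1 y1], (IHd2 G' Hi e2) as [x2 y2].
    exists (d_impE _ _ _ x1 x2); split; assumption.
  - destruct (IHd G' Hi e) as [x y]. exists (d_botE _ _ x); exact y.
  - destruct (IHd G' Hi e) as [x y]. exists (d_exI _ _ _ x); exact y.
  - destruct e as [e1 e2].
    destruct (IHd1 G' Hi e1) as [x1 y1],
      (IHd2 _ (incl_cons_cons A _ _ (incl_map (lift_f 0) Hi)) e2) as [x2 y2].
    exists (d_exE _ _ _ x1 x2); split; assumption.
  - destruct e as [e1 e2].
    destruct (IHd1 G' Hi e1) as [x1 y1], (IHd2 G' Hi e2) as [x2 y2].
    exists (d_ind _ _ x1 x2); split; assumption.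
  - destruct e.
Qed.

Lemma int_em_provable G A : int_provable G A -> em_provable G A.
Proof. intros [d e]. exists d. now constructor. Qed.

Lemma em_provable_EM G A C :
  em_provable (A :: G) C -> em_provable (fNot A :: G) C -> em_provable G C.
Proof. intros [d1 t1] [d2 t2]. exists (d_EM _ _ _ d1 d2). now constructor. Qed.

Lemma em_provable_bind G A C :
  em_provable G A ->
  (forall G', incl G G' -> int_provable G' A -> em_provable G' C) ->
  em_provable G C.
Proof.
  intros [d t]. revert C. induction t as [G A d e | G A' A d1 d2 _ IH1 _ IH2];
    intros C HC.
  - apply HC; [apply incl_refl | exists d; exact e].
  - apply (em_provable_EM _ A'); [apply IH1 | apply IH2];
      intros G' Hi; apply HC, (incl_tran (incl_tl _ (incl_refl G)) Hi).
Qed.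

Lemma em_provable_weaken G G' A :
  incl G G' -> em_provable G A -> em_provable G' A.
Proof.
  intros Hi [d t]. revert G' Hi.
  induction t as [G A d e | G A' A d1 d2 _ IH1 _ IH2]; intros G' Hi.
  - apply int_em_provable, (int_provable_weaken G); [exact Hi | exists d; exact e].
  - apply (em_provable_EM _ A'); [apply IH1 | apply IH2]; apply incl_cons_cons, Hi.
Qed.

Lemma em_provable_unary_rule {A C} (r : forall G, deriv G A -> deriv G C) :
  (forall G d, em_free d -> em_free (r G d)) ->
  forall {G}, em_provable G A -> em_provable G C.
Proof.
  intros Hr G HA. apply (em_provable_bind _ _ _ HA).
  intros G' _ [d e]. apply int_em_provable. exists (r G' d). exact (Hr _ _ e).
Qed.

Lemma em_provable_binary_rule {A B C} (r : forall G, deriv G A -> deriv G B -> deriv G C) :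
  (forall G d1 d2, em_free d1 -> em_free d2 -> em_free (r G d1 d2)) ->
  forall {G}, em_provable G A -> em_provable G B -> em_provable G C.
Proof.
  intros Hr G HA HB. apply (em_provable_bind _ _ _ HA). intros G1 Hi1 HA1.
  apply (em_provable_bind _ _ _ (em_provable_weaken _ _ _ Hi1 HB)).
  intros G2 Hi2 [d2 e2].
  destruct (int_provable_weaken _ _ _ Hi2 HA1) as [d1 e1].
  apply int_em_provable. exists (r G2 d1 d2). exact (Hr _ _ _ e1 e2).
Qed.

Lemma em_provable_bot G : em_provable G fBot -> int_provable G fBot.
Proof.
  intros [d t]. remember fBot as b eqn:Eb.
  induction t as [G A d e | G A C d1 d2 _ IH1 _ IH2]; subst.
  - exists d; exact e.
  - destruct (IH1 eq_refl) as [x1 e1], (IH2 eq_refl) as [x2 e2].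
    exists (d_impE G (fNot A) fBot (d_impI G (fNot A) fBot x2) (d_impI G A fBot x1)).
    simpl; auto.
Qed.

Lemma em_provable_refute G C :
  In (fNot C) G -> em_provable G C -> int_provable G fBot.
Proof.
  intros HnC HC. apply em_provable_bot, (em_provable_bind _ _ _ HC).
  intros G' Hi [d e]. apply int_em_provable.
  exists (d_impE G' C fBot (d_hyp _ _ (Hi _ HnC)) d). simpl; auto.
Qed.

Lemma em_provable_impI G A B :
  em_provable (A :: G) B -> em_provable G (fImp A B).
Proof.
  intros HB. apply (em_provable_EM _ A).
  - apply (em_provable_bind _ _ _ HB). intros G' Hi HB'.
    destruct (int_provable_weaken _ (A :: G') _ (incl_tl _ (incl_refl _)) HB') as [d e].
    apply int_em_provable. exists (d_impI _ _ _ d). exact e.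
  - apply int_em_provable.
    exists (d_impI _ A B (d_botE _ B (d_impE (A :: fNot A :: G) A fBot
      (d_hyp _ _ (in_cons _ _ _ (in_eq _ _))) (d_hyp _ _ (in_eq _ _))))).
    simpl; auto.
Qed.

Lemma em_provable_orE G A B C :
  em_provable G (fOr A B) -> em_provable (A :: G) C -> em_provable (B :: G) C ->
  em_provable G C.
Proof.
  intros HAB HA HB. apply (em_provable_EM _ A); [exact HA |].
  apply (em_provable_EM _ B).
  - apply (em_provable_weaken (B :: G)); [apply incl_cons_cons, incl_tl, incl_refl | exact HB].
  - apply (em_provable_bind _ _ _
      (em_provable_weaken G _ _ (incl_tl _ (incl_tl _ (incl_refl _))) HAB)).
    intros G' Hi [d e].
    assert (HnA : In (fNot A) G') by (apply Hi; right; left; reflexivity).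
    assert (HnB : In (fNot B) G') by (apply Hi; left; reflexivity).
    apply int_em_provable.
    exists (d_orE _ _ _ _ d
      (d_botE _ C (d_impE _ A fBot (d_hyp _ _ (in_cons _ _ _ HnA)) (d_hyp _ _ (in_eq _ _))))
      (d_botE _ C (d_impE _ B fBot (d_hyp _ _ (in_cons _ _ _ HnB)) (d_hyp _ _ (in_eq _ _))))).
    simpl; auto.
Qed.

Lemma em_provable_exE G A C :
  em_provable G (fEx A) -> em_provable (A :: map (lift_f 0) G) (lift_f 0 C) ->
  em_provable G C.
Proof.
  intros HEx HC. apply (em_provable_EM _ C).
  - apply int_em_provable. exists (d_hyp _ _ (in_eq _ _)). exact I.
  - apply (em_provable_bind _ _ _ (em_provable_weaken G _ _ (incl_tl _ (incl_refl _)) HEx)).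
    intros G' Hi [d e].
    assert (HnC : In (fNot C) G') by (apply Hi; left; reflexivity).
    assert (Hi' : incl (A :: map (lift_f 0) G) (A :: map (lift_f 0) G')).
    { apply incl_cons_cons, incl_map, (incl_tran (incl_tl _ (incl_refl G)) Hi). }
    destruct (em_provable_refute (A :: map (lift_f 0) G') (lift_f 0 C)) as [d' e'].
    + right. exact (in_map (lift_f 0) _ _ HnC).
    + exact (em_provable_weaken _ _ _ Hi' HC).
    + apply int_em_provable. exists (d_botE _ C (d_exE _ A fBot d d')). simpl; auto.
Qed.

Theorem mainTheorem10 :
  forall (G : list form) (F : form) (d : deriv G F),
    exists d' : deriv G F, em_tree G F d'.
Proof.
  intros G F d. change (em_provable G F).
  induction d.
  - apply int_em_provable. exists (d_hyp _ _ i). exact I.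
  - apply int_em_provable. exists (d_ax _ _ p). exact I.
  - exact (em_provable_binary_rule (fun G => d_andI G A B) (fun _ _ _ => @conj _ _) IHd1 IHd2).
  - exact (em_provable_unary_rule (fun G => d_andE1 G A B) (fun _ _ e => e) IHd).
  - exact (em_provable_unary_rule (fun G => d_andE2 G A B) (fun _ _ e => e) IHd).
  - exact (em_provable_unary_rule (fun G => d_orI1 G A B) (fun _ _ e => e) IHd).
  - exact (em_provable_unary_rule (fun G => d_orI2 G A B) (fun _ _ e => e) IHd).
  - exact (em_provable_orE _ _ _ _ IHd1 IHd2 IHd3).
  - exact (em_provable_impI _ _ _ IHd).
  - exact (em_provable_binary_rule (fun G => d_impE G A B) (fun _ _ _ => @conj _ _) IHd1 IHd2).
  - exact (em_provable_unary_rule (fun G => d_botE G A) (fun _ _ e => e) IHd).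
  - exact (em_provable_unary_rule (fun G => d_exI G A t) (fun _ _ e => e) IHd).
  - exact (em_provable_exE _ _ _ IHd1 IHd2).
  - exact (em_provable_binary_rule (fun G => d_ind G A) (fun _ _ _ => @conj _ _) IHd1 IHd2).
  - exact (em_provable_EM _ _ _ IHd1 IHd2).
Qed.
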